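(* Let $X$ be a Fréchet space and $A,B$ dense countable subsets of $X$. Then there exists a Banach disk $D$ in $X$ such that $A,B\subseteq X_D$ and both $A$ and $B$ are dense in the Banach space $(X_D,p_D)$.
   Context: A Fréchet space is a complete metrizable locally convex (Hausdorff) space over $\mathbb{K}\in\{\mathbb{R},\mathbb{C}\}$. ''Countable'' means infinite countable. A disk is a bounded, convex, balanced set $D$; $X_D=\mathrm{span}(D)$ with norm $p_D$ the Minkowski functional of $D$; $D$ is a Banach disk if $(X_D,p_D)$ is complete. *)

From Stdlib Require Import Reals.
Open Scope R_scope.

(** * Scalar field K in {R, C}; C is modelled as R*R. *)
Inductive Kind := KR | KC.

Definition Kt (k : Kind) : Type :=
  match k with KR => R | KC => (R * R)%type end.

Definition Kadd (k : Kind) : Kt k -> Kt k -> Kt k :=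
  match k return Kt k -> Kt k -> Kt k with
  | KR => Rplus
  | KC => fun z w => (fst z + fst w, snd z + snd w)
  end.

Definition Kmul (k : Kind) : Kt k -> Kt k -> Kt k :=
  match k return Kt k -> Kt k -> Kt k with
  | KR => Rmult
  | KC => fun z w => (fst z * fst w - snd z * snd w, fst z * snd w + snd z * fst w)
  end.

Definition KofR (k : Kind) : R -> Kt k :=
  match k return R -> Kt k with
  | KR => fun t => t
  | KC => fun t => (t, 0)
  end.

Definition Kabs (k : Kind) : Kt k -> R :=
  match k return Kt k -> R with
  | KR => Rabs
  | KC => fun z => sqrt (fst z * fst z + snd z * snd z)
  end.

(** * Fréchet spaces over K: vector spaces whose (locally convex, metrizable)
    topology is given by an increasing separating sequence of seminorms,
    and which are complete. *)
Record Frechet (k : Kind) := {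
  V :> Type;
  vadd : V -> V -> V;
  vzero : V;
  vopp : V -> V;
  vscal : Kt k -> V -> V;
  vadd_assoc : forall x y z, vadd x (vadd y z) = vadd (vadd x y) z;
  vadd_comm : forall x y, vadd x y = vadd y x;
  vadd_0 : forall x, vadd x vzero = x;
  vadd_opp : forall x, vadd x (vopp x) = vzero;
  vscal_assoc : forall a b x, vscal a (vscal b x) = vscal (Kmul k a b) x;
  vscal_1 : forall x, vscal (KofR k 1) x = x;
  vscal_distr_v : forall a x y, vscal a (vadd x y) = vadd (vscal a x) (vscal a y);
  vscal_distr_s : forall a b x, vscal (Kadd k a b) x = vadd (vscal a x) (vscal b x);
  sn : nat -> V -> R;
  sn_nonneg : forall n x, 0 <= sn n x;
  sn_triangle : forall n x y, sn n (vadd x y) <= sn n x + sn n y;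
  sn_homog : forall n a x, sn n (vscal a x) = Kabs k a * sn n x;
  sn_mono : forall n x, sn n x <= sn (S n) x;
  sn_sep : forall x, (forall n, sn n x = 0) -> x = vzero;
  complete : forall u : nat -> V,
    (forall n eps, 0 < eps -> exists N, forall p q, (N <= p)%nat -> (N <= q)%nat ->
        sn n (vadd (u p) (vopp (u q))) < eps) ->
    exists l, forall n eps, 0 < eps -> exists N, forall p, (N <= p)%nat ->
        sn n (vadd (u p) (vopp l)) < eps
}.

Arguments vadd {k X} : rename.
Arguments vzero {k X} : rename.
Arguments vopp {k X} : rename.
Arguments vscal {k X} : rename.
Arguments sn {k X} : rename.

Section Defs.
Context {k : Kind} {X : Frechet k}.

Definition vsub (x y : X) : X := vadd x (vopp y).

(** "countable" = infinite countable *)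
Definition countable_inf (A : X -> Prop) : Prop :=
  exists f : nat -> X, (forall n m, f n = f m -> n = m) /\
                       (forall x, A x <-> exists n, f n = x).

Definition dense_in_X (A : X -> Prop) : Prop :=
  forall x n eps, 0 < eps -> exists a, A a /\ sn n (vsub x a) < eps.

Definition bounded (D : X -> Prop) : Prop :=
  forall n, exists M, forall d, D d -> sn n d <= M.

Definition convex (D : X -> Prop) : Prop :=
  forall x y t, D x -> D y -> 0 <= t <= 1 ->
    D (vadd (vscal (KofR k t) x) (vscal (KofR k (1 - t)) y)).

Definition balanced (D : X -> Prop) : Prop :=
  forall a x, Kabs k a <= 1 -> D x -> D (vscal a x).

Definition disk (D : X -> Prop) : Prop := bounded D /\ convex D /\ balanced D.

(** X_D = span(D) *)
Inductive span (D : X -> Prop) : X -> Prop :=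
  | span_0 : span D vzero
  | span_in : forall d, D d -> span D d
  | span_add : forall x y, span D x -> span D y -> span D (vadd x y)
  | span_scal : forall a x, span D x -> span D (vscal a x).

(** [minkowski D x r]: r = p_D(x) = inf { t > 0 | x ∈ t D } *)
Definition minkowski (D : X -> Prop) (x : X) (r : R) : Prop :=
  let S := fun t => 0 < t /\ exists d, D d /\ x = vscal (KofR k t) d in
  (forall t, S t -> r <= t) /\ (forall r', (forall t, S t -> r' <= t) -> r' <= r).

Definition pD_lt (D : X -> Prop) (x : X) (eps : R) : Prop :=
  exists r, minkowski D x r /\ r < eps.

Definition banach_disk (D : X -> Prop) : Prop :=
  disk D /\
  forall u : nat -> X, (forall p, span D (u p)) ->
    (forall eps, 0 < eps -> exists N, forall p q, (N <= p)%nat -> (N <= q)%nat ->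
        pD_lt D (vsub (u p) (u q)) eps) ->
    exists l, span D l /\
      forall eps, 0 < eps -> exists N, forall p, (N <= p)%nat ->
        pD_lt D (vsub (u p) l) eps.

Definition dense_in_XD (D A : X -> Prop) : Prop :=
  forall x, span D x -> forall eps, 0 < eps -> exists a, A a /\ pD_lt D (vsub x a) eps.

End Defs.

(** Let [g] be a sequence bounded in every seminorm.  Its graded closed
    absolutely convex hull [hull g t] is defined inductively: [c * g j] has
    size [|c|], and the sum of a convergent series whose terms have sizes
    [d i] with [sum d i <= t] has size [t].  The unit hull [D := hull g 1] is
    a Banach disk, [X_D] is the union of the hulls, and [p_D(x) < eps] iff [x]
    has some size [< eps] (section [UnitHull]); completeness comes from
    telescoping a fast Cauchy subsequence.  A set [P] is dense in [(X_D, p_D)]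
    as soon as it approximates (in sizes) every generator [g j] and
    approximately absorbs sums and multiplication by a dense sequence of
    scalars (section [Approximation]).  Finally (section [Generators]) [g] is
    built from enumerations of [A] and [B]: its terms are normalized copies of
    the elements of [A], [B], of their pairwise sums and scalar multiples, and
    the amplified errors [(m + 1) (y - a)] of approximating these targets [y]
    by [a] in [A] or in [B] to precision [1/(m + 1)]; the [j]-th term has
    [j]-th seminorm at most 1, which makes [g] bounded. *)

From Stdlib Require Import Reals Lra Lia ZArith Classical ClassicalEpsilon Cantor.
Open Scope R_scope.

Section Scalars.
Variable k : Kind.

Lemma Kabs_nonneg (a : Kt k) : 0 <= Kabs k a.
Proof. destruct k; simpl; [apply Rabs_pos | apply sqrt_pos]. Qed.

Lemma Kabs_KofR (t : R) : Kabs k (KofR k t) = Rabs t.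
Proof.
  destruct k; simpl; [reflexivity|].
  replace (t * t + 0 * 0) with (Rsqr t) by (unfold Rsqr; ring).
  apply sqrt_Rsqr_abs.
Qed.

Lemma Kabs_mul (a b : Kt k) : Kabs k (Kmul k a b) = Kabs k a * Kabs k b.
Proof.
  destruct k; simpl; [apply Rabs_mult|].
  destruct a as [a1 a2], b as [b1 b2]; simpl.
  rewrite <- sqrt_mult by nra. f_equal. ring.
Qed.

Lemma Kmul_comm (a b : Kt k) : Kmul k a b = Kmul k b a.
Proof. destruct k; simpl; [ring | destruct a, b; simpl; f_equal; ring]. Qed.

Lemma KofR_mul (s t : R) : Kmul k (KofR k s) (KofR k t) = KofR k (s * t).
Proof. destruct k; simpl; [ring | f_equal; ring]. Qed.

Lemma KofR_add (s t : R) : Kadd k (KofR k s) (KofR k t) = KofR k (s + t).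
Proof. destruct k; simpl; [ring | f_equal; ring]. Qed.

Lemma Kmul_0l (a : Kt k) : Kmul k (KofR k 0) a = KofR k 0.
Proof. destruct k; simpl; [ring | destruct a; simpl; f_equal; ring]. Qed.

Lemma Kabs_m1 : Kabs k (KofR k (-1)) = 1.
Proof. rewrite Kabs_KofR, Rabs_left; lra. Qed.

Definition Ksub (a b : Kt k) : Kt k := Kadd k a (Kmul k (KofR k (-1)) b).

End Scalars.

Section VectorAlgebra.
Variable k : Kind.
Variable X : Frechet k.
Implicit Types x y z : X.

Lemma vadd_0l x : vadd vzero x = x.
Proof. rewrite vadd_comm. apply vadd_0. Qed.

Lemma vadd_cancel z x y : vadd z x = vadd z y -> x = y.
Proof.
  intro H. rewrite <- (vadd_0l x), <- (vadd_0l y), <- (vadd_opp _ _ z).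
  rewrite (vadd_comm _ _ z (vopp z)), <- !vadd_assoc, H. reflexivity.
Qed.

Lemma vscal0 x : vscal (KofR k 0) x = vzero.
Proof.
  apply (vadd_cancel (vscal (KofR k 0) x)).
  rewrite vadd_0, <- vscal_distr_s, KofR_add, Rplus_0_r. reflexivity.
Qed.

Lemma vscal_m1 x : vscal (KofR k (-1)) x = vopp x.
Proof.
  apply (vadd_cancel x). rewrite vadd_opp.
  rewrite <- (vscal_1 _ _ x) at 1.
  rewrite <- vscal_distr_s, KofR_add, Rplus_opp_r. apply vscal0.
Qed.

Lemma vscal_zero (a : Kt k) : vscal a (@vzero k X) = vzero.
Proof.
  transitivity (vscal a (vscal (KofR k 0) (@vzero k X))); [now rewrite vscal0|].
  rewrite vscal_assoc, Kmul_comm, Kmul_0l. apply vscal0.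
Qed.

Lemma vopp_add x y : vopp (vadd x y) = vadd (vopp x) (vopp y).
Proof. rewrite <- !vscal_m1. apply vscal_distr_v. Qed.

Lemma vopp_opp x : vopp (vopp x) = x.
Proof.
  apply (vadd_cancel (vopp x)). rewrite vadd_opp, vadd_comm, vadd_opp. reflexivity.
Qed.

Lemma vscal_opp (a : Kt k) x : vscal a (vopp x) = vopp (vscal a x).
Proof. rewrite <- !vscal_m1, !vscal_assoc, Kmul_comm. reflexivity. Qed.

Lemma sn_opp n x : sn n (vopp x) = sn n x.
Proof. rewrite <- vscal_m1, sn_homog, Kabs_m1. ring. Qed.

Lemma sn_zero n : sn n (@vzero k X) = 0.
Proof.
  transitivity (sn n (vscal (KofR k 0) (@vzero k X))); [now rewrite vscal0|].
  rewrite sn_homog, Kabs_KofR, Rabs_R0. ring.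
Qed.

Lemma sn_mono_le n m x : (n <= m)%nat -> sn n x <= sn m x.
Proof. induction 1; [lra | pose proof (sn_mono _ _ m x); lra]. Qed.

Lemma vsub_refl x : vsub x x = vzero.
Proof. apply vadd_opp. Qed.

Lemma vsub_chain x y z : vsub x z = vadd (vsub x y) (vsub y z).
Proof.
  unfold vsub. rewrite <- vadd_assoc. f_equal.
  rewrite vadd_assoc, (vadd_comm _ _ (vopp y)), vadd_opp, vadd_0l. reflexivity.
Qed.

Lemma vsub_add2 x y x' y' : vsub (vadd x y) (vadd x' y') = vadd (vsub x x') (vsub y y').
Proof.
  unfold vsub. rewrite vopp_add, <- !vadd_assoc. f_equal.
  rewrite !vadd_assoc. f_equal. apply vadd_comm.
Qed.

Lemma vsub_sub_r x y z : vsub (vsub x z) (vsub y z) = vsub x y.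
Proof. unfold vsub at 2 3. rewrite vsub_add2, vsub_refl, vadd_0. reflexivity. Qed.

Lemma vsub_scal (a : Kt k) x y : vsub (vscal a x) (vscal a y) = vscal a (vsub x y).
Proof. unfold vsub. rewrite vscal_distr_v, vscal_opp. reflexivity. Qed.

Lemma vsub_scal_l (a b : Kt k) x : vsub (vscal a x) (vscal b x) = vscal (Ksub k a b) x.
Proof. unfold vsub, Ksub. rewrite vscal_distr_s, <- vscal_assoc, vscal_m1. reflexivity. Qed.

Lemma vsub_swap x y : vsub y x = vopp (vsub x y).
Proof. unfold vsub. rewrite vopp_add, vopp_opp. apply vadd_comm. Qed.

Lemma sn_sub_sym n x y : sn n (vsub x y) = sn n (vsub y x).
Proof. rewrite (vsub_swap x y), sn_opp. reflexivity. Qed.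

Lemma vadd_sub x y : vadd y (vsub x y) = x.
Proof.
  unfold vsub. rewrite (vadd_comm _ _ x), vadd_assoc, vadd_opp, vadd_0l. reflexivity.
Qed.

End VectorAlgebra.

Fixpoint rsum (d : nat -> R) (m : nat) : R :=
  match m with 0%nat => 0 | S m => rsum d m + d m end.

Lemma rsum_scal c d m : rsum (fun i => c * d i) m = c * rsum d m.
Proof. induction m; simpl; [ring | rewrite IHm; ring]. Qed.

Lemma rsum_shift d I m : rsum (fun i => d (I + i)%nat) m = rsum d (I + m) - rsum d I.
Proof.
  induction m; simpl; [rewrite Nat.add_0_r; ring|].
  rewrite IHm, Nat.add_succ_r. simpl. ring.
Qed.

Lemma rsum_nonneg d m : (forall i, 0 <= d i) -> 0 <= rsum d m.
Proof. intro Hd. induction m; simpl; [lra | specialize (Hd m); lra]. Qed.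

Lemma rsum_ge d m j : (forall i, 0 <= d i) -> (j < m)%nat -> d j <= rsum d m.
Proof.
  intros Hd Hj. induction Hj; simpl.
  - pose proof (rsum_nonneg d j Hd). lra.
  - specialize (Hd m). lra.
Qed.

(** Tails of a series with bounded partial sums are eventually small
    (the partial sums converge to their supremum). *)
Lemma rsum_tail d r : (forall m, rsum d m <= r) ->
  forall eta, 0 < eta -> exists I, forall m, rsum d (I + m) - rsum d I <= eta.
Proof.
  intros Hb eta Heta.
  destruct (completeness (fun x => exists m, x = rsum d m)) as [L [HL1 HL2]].
  { exists r. intros x [m ->]. apply Hb. }
  { exists (rsum d 0). eauto. }
  destruct (classic (exists I, L - eta < rsum d I)) as [[I HI]|HN].
  - exists I. intro m. assert (rsum d (I + m) <= L) by (apply HL1; eauto). lra.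
  - exfalso. assert (L <= L - eta); [|lra].
    apply HL2. intros x [m ->].
    destruct (Rle_dec (rsum d m) (L - eta)); auto.
    exfalso. apply HN. exists m. lra.
Qed.

Lemma bounded_of_diagonal {k : Kind} {X : Frechet k} (g : nat -> X) :
  (forall j, sn j (g j) <= 1) -> forall n, exists M, 0 <= M /\ forall j, sn n (g j) <= M.
Proof.
  intros Hdiag n. set (d := fun j => sn n (g j)).
  assert (Hd : forall j, 0 <= d j) by (intro; apply sn_nonneg).
  pose proof (rsum_nonneg d n Hd).
  exists (1 + rsum d n). split; [lra|]. intro j.
  destruct (Nat.lt_ge_cases j n) as [Hjn|Hnj].
  - pose proof (rsum_ge d n j Hd Hjn). unfold d in *. lra.
  - pose proof (sn_mono_le k X n j (g j) Hnj). specialize (Hdiag j). lra.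
Qed.

Section Series.
Variable k : Kind.
Variable X : Frechet k.
Implicit Types x y v : X.

Fixpoint psum (s : nat -> X) (m : nat) : X :=
  match m with 0%nat => vzero | S m => vadd (psum s m) (s m) end.

Definition conv (f : nat -> X) (v : X) : Prop :=
  forall n eps, 0 < eps -> exists N, forall m, (N <= m)%nat -> sn n (vsub (f m) v) < eps.

Lemma psum_scal a s m : psum (fun i => vscal a (s i)) m = vscal a (psum s m).
Proof.
  induction m; simpl; [symmetry; apply vscal_zero|].
  rewrite IHm, vscal_distr_v. reflexivity.
Qed.

Lemma psum_shift s I m : psum (fun i => s (I + i)%nat) m = vsub (psum s (I + m)) (psum s I).
Proof.
  induction m; simpl; [rewrite Nat.add_0_r, vsub_refl; reflexivity|].
  rewrite IHm, Nat.add_succ_r. simpl. unfold vsub.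
  rewrite <- !vadd_assoc. f_equal. apply vadd_comm.
Qed.

Lemma conv_ext f f' v : (forall m, f m = f' m) -> conv f v -> conv f' v.
Proof.
  intros E H n eps He. destruct (H n eps He) as [N HN].
  exists N. intros m Hm. rewrite <- E. auto.
Qed.

Lemma conv_scal a f v : conv f v -> conv (fun m => vscal a (f m)) (vscal a v).
Proof.
  intros H n eps Heps. pose proof (Kabs_nonneg k a) as Ha.
  assert (Hq : 0 < eps / (Kabs k a + 1)) by (apply Rdiv_lt_0_compat; lra).
  destruct (H n _ Hq) as [N HN]. exists N. intros m Hm.
  rewrite vsub_scal, sn_homog. specialize (HN m Hm).
  assert (E : eps / (Kabs k a + 1) * (Kabs k a + 1) = eps) by (field; lra).
  pose proof (sn_nonneg _ _ n (vsub (f m) v)). nra.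
Qed.

Lemma conv_sub f v c : conv f v -> conv (fun m => vsub (f m) c) (vsub v c).
Proof.
  intros H n eps He. destruct (H n eps He) as [N HN].
  exists N. intros m Hm. rewrite vsub_sub_r. auto.
Qed.

Lemma conv_eventually f v N : (forall m, (N <= m)%nat -> f m = v) -> conv f v.
Proof.
  intros H n eps He. exists N. intros m Hm.
  rewrite H, vsub_refl, sn_zero by auto. exact He.
Qed.

Lemma conv_subseq f v (phi : nat -> nat) :
  conv f v -> (forall i, (i <= phi i)%nat) -> conv (fun i => f (phi i)) v.
Proof.
  intros H Hphi n eps He. destruct (H n eps He) as [N HN].
  exists N. intros m Hm. apply HN. specialize (Hphi m). lia.
Qed.

End Series.
Arguments psum {k X}.
Arguments conv {k X}.

Section Hull.
Variable k : Kind.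
Variable X : Frechet k.
Variable g : nat -> X.
Implicit Types v w : X.

Inductive hull : R -> X -> Prop :=
  | hull_gen (c : Kt k) (j : nat) : hull (Kabs k c) (vscal c (g j))
  | hull_series (s : nat -> X) (d : nat -> R) (r : R) v :
      (forall i, hull (d i) (s i)) -> (forall I, rsum d I <= r) ->
      conv (psum s) v -> hull r v.

Lemma hull_nonneg {r v} : hull r v -> 0 <= r.
Proof. destruct 1; [apply Kabs_nonneg | apply (H0 0%nat)]. Qed.

Lemma hull_zero : hull 0 vzero.
Proof.
  pose proof (hull_gen (KofR k 0) 0) as H.
  rewrite vscal0, Kabs_KofR, Rabs_R0 in H. exact H.
Qed.

(** Sizes add up: the sum of two terms is a series with two nonzero terms. *)
Lemma hull_add {r r' t v w} : hull r v -> hull r' w -> r + r' <= t -> hull t (vadd v w).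
Proof.
  intros Hv Hw Hle. pose proof (hull_nonneg Hv). pose proof (hull_nonneg Hw).
  set (s := fun i => match i with 0%nat => v | 1%nat => w | _ => vzero end).
  set (d := fun i => match i with 0%nat => r | 1%nat => r' | _ => 0 end).
  assert (Hd : forall m, rsum d (2 + m) = r + r').
  { induction m; [simpl; ring|]. rewrite Nat.add_succ_r. simpl in *. rewrite IHm. ring. }
  assert (Hs : forall m, psum s (2 + m) = vadd v w).
  { induction m; [simpl; rewrite vadd_0l; reflexivity|].
    rewrite Nat.add_succ_r. simpl in *. rewrite IHm. apply vadd_0. }
  apply (hull_series s d).
  - intros [|[|i]]; [exact Hv | exact Hw | apply hull_zero].
  - intros [|[|I]]; simpl; try lra. specialize (Hd I). simpl in Hd. lra.
  - apply conv_eventually with 2%nat. intros m Hm.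
    replace m with (2 + (m - 2))%nat by lia. apply Hs.
Qed.

Lemma hull_mono r r' v : hull r v -> r <= r' -> hull r' v.
Proof.
  intros H Hle. rewrite <- (vadd_0 _ _ v).
  apply (hull_add H hull_zero). lra.
Qed.

Lemma hull_scal r v a : hull r v -> hull (Kabs k a * r) (vscal a v).
Proof.
  induction 1.
  - rewrite vscal_assoc, <- Kabs_mul. apply hull_gen.
  - apply (hull_series (fun i => vscal a (s i)) (fun i => Kabs k a * d i)); auto.
    + intro I. rewrite rsum_scal. apply Rmult_le_compat_l; auto using Kabs_nonneg.
    + apply conv_ext with (f := fun m => vscal a (psum s m)).
      * intro m. symmetry. apply psum_scal.
      * apply conv_scal. assumption.
Qed.

Lemma hull_series_tail s d r v : (forall i, hull (d i) (s i)) -> (forall I, rsum d I <= r) ->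
  conv (psum s) v -> forall eta, 0 < eta -> exists I, hull eta (vsub v (psum s I)).
Proof.
  intros Hs Hd Hc eta He. destruct (rsum_tail d r Hd eta He) as [I HI]. exists I.
  apply (hull_series (fun i => s (I + i)%nat) (fun i => d (I + i)%nat)); auto.
  - intro m. rewrite rsum_shift. auto.
  - apply conv_ext with (f := fun m => vsub (psum s (I + m)) (psum s I)).
    + intro m. symmetry. apply psum_shift.
    + apply conv_sub. apply conv_subseq with (f := psum s); [exact Hc | intro; lia].
Qed.

Hypothesis g_bounded : forall n, exists M, 0 <= M /\ forall j, sn n (g j) <= M.

Lemma hull_sn_bound n : exists M, 0 <= M /\ forall r v, hull r v -> sn n v <= M * r.
Proof.
  destruct (g_bounded n) as [M [HM Hg]]. exists M. split; [exact HM|].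
  induction 1.
  - rewrite sn_homog, Rmult_comm. apply Rmult_le_compat_r; auto using Kabs_nonneg.
  - assert (Hp : forall m, sn n (psum s m) <= M * rsum d m).
    { induction m; simpl; [rewrite sn_zero; lra|].
      pose proof (sn_triangle _ _ n (psum s m) (s m)). specialize (H0 m). lra. }
    destruct (Rle_dec (sn n v) (M * r)) as [|Hgt]; [assumption|exfalso].
    assert (Heps : 0 < sn n v - M * r) by lra.
    destruct (H2 n _ Heps) as [N HN]. specialize (HN N (le_n _)).
    pose proof (sn_triangle _ _ n (psum s N) (vsub v (psum s N))) as Htri.
    rewrite vadd_sub, sn_sub_sym in Htri.
    specialize (Hp N). specialize (H1 N).
    assert (M * rsum d N <= M * r) by (apply Rmult_le_compat_l; auto). lra.
Qed.

End Hull.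
Arguments hull {k X} g.
Arguments hull_gen {k X g}.
Arguments hull_series {k X g}.
Arguments hull_nonneg {k X g r v}.
Arguments hull_zero {k X g}.
Arguments hull_add {k X g r r' t v w}.
Arguments hull_mono {k X g r r' v}.
Arguments hull_scal {k X g r v} a.
Arguments hull_series_tail {k X g s d r v}.
Arguments hull_sn_bound {k X g}.

Lemma hull_geometric_tail {k : Kind} {X : Frechet k} (g w : nat -> X) (l : X) :
  (forall K, hull g ((/2) ^ K) (vsub (w (S K)) (w K))) -> conv w l ->
  forall K, hull g (2 * (/2) ^ K) (vsub l (w K)).
Proof.
  intros Hw Hl K.
  apply (hull_series (fun i => vsub (w (S (K + i)%nat)) (w (K + i)%nat)) (fun i => (/2) ^ (K + i)%nat)).
  - intro i. apply Hw.
  - intro I.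
    assert (E : rsum (fun i => (/2) ^ (K + i)%nat) I = 2 * (/2) ^ K * (1 - (/2) ^ I)).
    { induction I; simpl; [ring|]. rewrite IHI, pow_add. simpl. field. }
    rewrite E. assert (0 < (/2) ^ K) by (apply pow_lt; lra).
    assert (0 < (/2) ^ I) by (apply pow_lt; lra). nra.
  - apply conv_ext with (f := fun I => vsub (w (K + I)%nat) (w K)).
    + induction m; simpl; [rewrite Nat.add_0_r, vsub_refl; reflexivity|].
      rewrite <- IHm, vadd_comm, <- vsub_chain, Nat.add_succ_r. reflexivity.
    + apply conv_sub. apply conv_subseq with (f := w); [exact Hl | intro; lia].
Qed.

Lemma nondecreasing_majorant (N : nat -> nat) : exists M : nat -> nat,
  (forall j, (N j <= M j)%nat) /\ (forall i j, (i <= j)%nat -> (M i <= M j)%nat) /\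
  (forall j, (j <= M j)%nat).
Proof.
  set (M := fix M j := match j with 0%nat => N 0%nat | S j => S (Nat.max (M j) (N (S j))) end).
  exists M. split; [|split].
  - destruct j; simpl; lia.
  - induction 1; [lia|]. simpl. lia.
  - induction j; simpl; lia.
Qed.

Lemma half_pow_small eps : 0 < eps -> exists K, (/2) ^ K < eps.
Proof.
  intro He. destruct (pow_lt_1_zero (/2)) with eps as [N HN]; auto.
  { rewrite Rabs_pos_eq; lra. }
  exists N. specialize (HN N (le_n _)).
  rewrite Rabs_pos_eq in HN; [exact HN | apply pow_le; lra].
Qed.

Section UnitHull.
Variable k : Kind.
Variable X : Frechet k.
Variable g : nat -> X.
Hypothesis g_bounded : forall n, exists M, 0 <= M /\ forall j, sn n (g j) <= M.

Definition unit_hull : X -> Prop := hull g 1.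

Lemma unit_hull_disk : disk unit_hull.
Proof.
  split; [|split].
  - intro n. destruct (hull_sn_bound g_bounded n) as [M [_ HM]].
    exists (M * 1). intros d Hd. apply HM. exact Hd.
  - intros x y t Hx Hy Ht.
    apply (hull_add (hull_scal (KofR k t) Hx) (hull_scal (KofR k (1 - t)) Hy)).
    rewrite !Kabs_KofR, !Rabs_pos_eq by lra. lra.
  - intros a x Ha Hx. eapply hull_mono; [apply (hull_scal a Hx) | lra].
Qed.

Lemma hull_factor t z : 0 < t -> hull g t z -> exists d, unit_hull d /\ z = vscal (KofR k t) d.
Proof.
  intros Ht H. exists (vscal (KofR k (/ t)) z). split.
  - unfold unit_hull. replace 1 with (Kabs k (KofR k (/ t)) * t).
    + apply hull_scal. exact H.
    + rewrite Kabs_KofR, Rabs_pos_eq; [field; lra | left; apply Rinv_0_lt_compat; lra].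
  - rewrite vscal_assoc, KofR_mul, Rinv_r, vscal_1 by lra. reflexivity.
Qed.

Lemma hull_of_unit_hull d t : unit_hull d -> 0 <= t -> hull g t (vscal (KofR k t) d).
Proof.
  intros H Ht. replace t with (Kabs k (KofR k t) * 1) at 1.
  - apply hull_scal. exact H.
  - rewrite Kabs_KofR, Rabs_pos_eq; lra.
Qed.

Lemma span_hull x : span unit_hull x -> exists t, hull g t x.
Proof.
  induction 1.
  - exists 0. apply hull_zero.
  - exists 1. exact H.
  - destruct IHspan1 as [t1 H1], IHspan2 as [t2 H2].
    exists (t1 + t2). apply (hull_add H1 H2). lra.
  - destruct IHspan as [t Ht]. eexists. apply (hull_scal a Ht).
Qed.

Lemma hull_span t x : hull g t x -> span unit_hull x.
Proof.
  intro H. pose proof (hull_nonneg H).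
  destruct (hull_factor (t + 1) x) as [d [Hd ->]]; [lra | eapply hull_mono; eauto; lra|].
  apply span_scal, span_in. exact Hd.
Qed.

Lemma pD_lt_of_hull z t eps : hull g t z -> t < eps -> pD_lt unit_hull z eps.
Proof.
  intros H Hlt. pose proof (hull_nonneg H) as Ht0.
  set (S := fun t => 0 < t /\ exists d, unit_hull d /\ z = vscal (KofR k t) d).
  assert (HS : S ((t + eps) / 2)).
  { split; [lra|]. apply hull_factor; [lra | eapply hull_mono; eauto; lra]. }
  destruct (completeness (fun y => S (- y))) as [m [Hm1 Hm2]].
  { exists 0. intros y [Hy _]. lra. }
  { exists (- ((t + eps) / 2)). rewrite Ropp_involutive. exact HS. }
  assert (-((t + eps) / 2) <= m) by (apply Hm1; rewrite Ropp_involutive; exact HS).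
  exists (- m). split; [split|lra].
  - intros t' Ht'. assert (- t' <= m) by (apply Hm1; rewrite Ropp_involutive; exact Ht'). lra.
  - intros r' Hr'. assert (m <= - r'); [|lra].
    apply Hm2. intros y Hy. specialize (Hr' _ Hy). lra.
Qed.

Lemma hull_of_pD_lt z eps : pD_lt unit_hull z eps -> exists t, t < eps /\ hull g t z.
Proof.
  intros [r [[Hlow Hglb] Hr]].
  destruct (classic (exists t, (0 < t /\ exists d, unit_hull d /\ z = vscal (KofR k t) d) /\ t < eps))
    as [[t [[Ht [d [Hd ->]]] Hte]]|HN].
  - exists t. split; [exact Hte | apply hull_of_unit_hull; auto; lra].
  - exfalso. assert (eps <= r); [|lra].
    apply Hglb. intros t Ht. destruct (Rle_dec eps t); [assumption|].
    exfalso. apply HN. exists t. split; [exact Ht | lra].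
Qed.

(** A sequence that is Cauchy for [p_D] is Cauchy in X, so has a limit there. *)
Lemma hull_cauchy_limit (u : nat -> X) :
  (forall eps, 0 < eps -> exists N, forall p q, (N <= p)%nat -> (N <= q)%nat ->
     hull g eps (vsub (u p) (u q))) ->
  exists l, conv u l.
Proof.
  intro Hc. apply (complete _ X u).
  intros n eps He. destruct (hull_sn_bound g_bounded n) as [M [HM HB]].
  assert (Hq : 0 < eps / (M + 1)) by (apply Rdiv_lt_0_compat; lra).
  destruct (Hc _ Hq) as [N HN]. exists N. intros p q Hp Hq'.
  specialize (HB _ _ (HN p q Hp Hq')). unfold vsub in HB.
  assert (E : eps / (M + 1) * (M + 1) = eps) by (field; lra). nra.
Qed.

Lemma unit_hull_banach : banach_disk unit_hull.
Proof.
  split; [exact unit_hull_disk|]. intros u Hu Hc.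
  assert (Hcauchy : forall eps, 0 < eps -> exists N, forall p q, (N <= p)%nat -> (N <= q)%nat ->
      hull g eps (vsub (u p) (u q))).
  { intros eps He. destruct (Hc eps He) as [N HN]. exists N. intros p q Hp Hq.
    destruct (hull_of_pD_lt _ _ (HN p q Hp Hq)) as [t [Ht HD]]. eapply hull_mono; eauto. lra. }
  destruct (hull_cauchy_limit u Hcauchy) as [l Hl].
  (* a subsequence [u (M K)] with consecutive differences of size (1/2)^K *)
  assert (HN : forall K, exists N, forall p q, (N <= p)%nat -> (N <= q)%nat ->
      hull g ((/2) ^ K) (vsub (u p) (u q))).
  { intro K. apply Hcauchy, pow_lt. lra. }
  destruct (choice _ HN) as [N HNs].
  destruct (nondecreasing_majorant N) as [M [HMN [HMmono HMid]]].
  assert (Htail : forall K, hull g (2 * (/2) ^ K) (vsub l (u (M K)))).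
  { apply (hull_geometric_tail g (fun K => u (M K))).
    - intro K. pose proof (HMN K). pose proof (HMmono K (S K) (Nat.le_succ_diag_r K)).
      apply HNs; lia.
    - apply conv_subseq with (f := u); [exact Hl | intro i; specialize (HMid i); lia]. }
  exists l. split.
  - rewrite <- (vadd_sub _ _ l (u (M 0%nat))). apply span_add; [apply Hu|].
    eapply hull_span. apply Htail.
  - intros eps He. destruct (half_pow_small (eps / 4)) as [K HK]; [lra|].
    exists (M K). intros p Hp. apply pD_lt_of_hull with (3 * (/2) ^ K).
    2: { assert (0 < (/2) ^ K) by (apply pow_lt; lra). lra. }
    rewrite (vsub_chain _ _ (u p) (u (M K)) l). apply (hull_add (r := (/2) ^ K) (r' := 2 * (/2) ^ K)).
    + specialize (HMN K). apply HNs; lia.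
    + rewrite vsub_swap, <- vscal_m1, <- (Rmult_1_l (2 * _)), <- (Kabs_m1 k).
      apply hull_scal, Htail.
    + lra.
Qed.

End UnitHull.
Arguments unit_hull {k X} g.
Arguments unit_hull_banach {k X g}.
Arguments span_hull {k X g x}.
Arguments hull_span {k X g t x}.
Arguments pD_lt_of_hull {k X g z t eps}.

Lemma mul_div_succ_le x e : 0 <= x -> 0 < e -> x * (e / (x + 1)) <= e.
Proof.
  intros Hx He. assert (E : x * (e / (x + 1)) = e - e / (x + 1)) by (field; lra).
  assert (0 < e / (x + 1)) by (apply Rdiv_lt_0_compat; lra). lra.
Qed.

Section Approximation.
Variable k : Kind.
Variable X : Frechet k.
Variable g : nat -> X.
Variable P : X -> Prop.
Variable lam : nat -> Kt k.

Definition approx (v : X) : Prop :=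
  forall eps, 0 < eps -> exists a, P a /\ hull g eps (vsub v a).

Hypothesis approx_sum_of_P : forall a1 a2, P a1 -> P a2 -> approx (vadd a1 a2).
Hypothesis approx_scal_of_P : forall a j, P a -> approx (vscal (lam j) a).
Hypothesis lam_dense : forall c eps, 0 < eps -> exists j, Kabs k (Ksub k c (lam j)) < eps.
Hypothesis approx_gen : forall j, approx (g j).

Lemma approx_add v w : approx v -> approx w -> approx (vadd v w).
Proof.
  intros Hv Hw eps He.
  destruct (Hv (eps / 3)) as [a1 [P1 D1]]; [lra|].
  destruct (Hw (eps / 3)) as [a2 [P2 D2]]; [lra|].
  destruct (approx_sum_of_P _ _ P1 P2 (eps / 3)) as [a [Pa Da]]; [lra|].
  exists a. split; [exact Pa|].
  rewrite (vsub_chain _ _ _ (vadd a1 a2)), vsub_add2.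
  apply (hull_add (hull_add D1 D2 (Rle_refl _)) Da). lra.
Qed.

(** [c v - a = (c - mu) v + mu (v - a1) + (mu a1 - a)] with [mu] a [lam]-value
    close to [c], [a1 ∈ P] close to [v] and [a ∈ P] close to [mu a1]. *)
Lemma approx_scal c {v t} : approx v -> hull g t v -> approx (vscal c v).
Proof.
  intros Hv Ht eps He. pose proof (hull_nonneg Ht) as Ht0.
  destruct (lam_dense c (eps / 3 / (t + 1))) as [j Hj].
  { apply Rdiv_lt_0_compat; lra. }
  set (mu := lam j) in *. pose proof (Kabs_nonneg k mu) as Hmu.
  destruct (Hv (eps / 3 / (Kabs k mu + 1))) as [a1 [P1 D1]].
  { apply Rdiv_lt_0_compat; lra. }
  destruct (approx_scal_of_P _ j P1 (eps / 3)) as [a [Pa Da]]; [lra|].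
  exists a. split; [exact Pa|].
  rewrite (vsub_chain _ _ _ (vscal mu v)), (vsub_chain _ _ (vscal mu v) (vscal mu a1)).
  rewrite vsub_scal_l, vsub_scal.
  apply (hull_add (hull_scal _ Ht) (hull_add (hull_scal mu D1) Da (Rle_refl _))).
  assert (E1 : Kabs k (Ksub k c mu) * t <= eps / 3).
  { pose proof (mul_div_succ_le t (eps / 3) Ht0 ltac:(lra)).
    pose proof (Kabs_nonneg k (Ksub k c mu)). nra. }
  pose proof (mul_div_succ_le (Kabs k mu) (eps / 3) Hmu ltac:(lra)). lra.
Qed.

Lemma approx_closed v :
  (forall eta, 0 < eta -> exists w, approx w /\ hull g eta (vsub v w)) -> approx v.
Proof.
  intros H eps He. destruct (H (eps / 2)) as [w [Hw Dw]]; [lra|].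
  destruct (Hw (eps / 2)) as [a [Pa Da]]; [lra|].
  exists a. split; [exact Pa|].
  rewrite (vsub_chain _ _ _ w). apply (hull_add Dw Da). lra.
Qed.

Lemma hull_gen_unit j : hull g 1 (g j).
Proof.
  pose proof (hull_gen (g := g) (KofR k 1) j) as H.
  rewrite vscal_1, Kabs_KofR, Rabs_R1 in H. exact H.
Qed.

Lemma approx_zero : approx vzero.
Proof.
  pose proof (approx_scal (KofR k 0) (approx_gen 0) (hull_gen_unit 0)) as H.
  rewrite vscal0 in H. exact H.
Qed.

(** Everything in a hull is approximable: generators by hypothesis, and a
    series sum through its partial sums, whose remainders are small. *)
Lemma approx_hull {t v} : hull g t v -> approx v.
Proof.
  induction 1 as [c j|s d r v Hs IHs Hd Hc].
  - exact (approx_scal c (approx_gen j) (hull_gen_unit j)).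
  - apply approx_closed. intros eta He.
    destruct (hull_series_tail Hs Hd Hc eta He) as [I HI].
    exists (psum s I). split; [clear HI|exact HI].
    induction I; simpl; [exact approx_zero | apply approx_add; auto].
Qed.

Lemma approx_dense : dense_in_XD (unit_hull g) P.
Proof.
  intros x Hx eps He. destruct (span_hull Hx) as [t Ht].
  destruct (approx_hull Ht (eps / 2)) as [a [Pa Da]]; [lra|].
  exists a. split; [exact Pa|]. apply (pD_lt_of_hull Da). lra.
Qed.

End Approximation.
Arguments approx {k X} g P.
Arguments approx_add {k X g P} approx_sum_of_P {v w}.
Arguments approx_scal {k X g P lam} approx_scal_of_P lam_dense c {v t}.
Arguments approx_dense {k X g P lam}.

Lemma small_inv eps : 0 < eps -> exists n : nat, / (INR n + 1) < eps.
Proof.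
  intro He. destruct (archimed (/ eps)) as [H1 _].
  assert (0 < / eps) by (apply Rinv_0_lt_compat; lra).
  assert (Hz : (0 < up (/ eps))%Z) by (apply lt_0_IZR; lra).
  exists (Z.to_nat (up (/ eps))). rewrite INR_IZR_INZ, Z2Nat.id by lia.
  rewrite <- (Rinv_inv eps) at 2.
  apply Rinv_lt_contravar; [apply Rmult_lt_0_compat|]; lra.
Qed.

Lemma inv_succ_pos (m : nat) : 0 < / (INR m + 1).
Proof. apply Rinv_0_lt_compat. pose proof (pos_INR m). lra. Qed.

Lemma IZR_split z : IZR z = INR (Z.to_nat z) - INR (Z.to_nat (- z)).
Proof. destruct z; simpl; unfold IZR; rewrite ?INR_IPR; simpl; lra. Qed.

Definition lamR (n : nat) : R :=
  let (a, r) := Cantor.of_nat n in let (b, c) := Cantor.of_nat r in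
  (INR a - INR b) / (INR c + 1).

Lemma lamR_dense x eps : 0 < eps -> exists n, Rabs (x - lamR n) < eps.
Proof.
  intro He. destruct (small_inv eps He) as [c Hc].
  assert (Hc0 : 0 < INR c + 1) by (pose proof (pos_INR c); lra).
  set (z := up (x * (INR c + 1))). destruct (archimed (x * (INR c + 1))) as [H1 H2].
  fold z in H1, H2.
  exists (Cantor.to_nat (Z.to_nat z, Cantor.to_nat (Z.to_nat (- z), c))).
  unfold lamR. rewrite !Cantor.cancel_of_to, <- IZR_split.
  assert (0 < IZR z / (INR c + 1) - x <= / (INR c + 1)).
  { split.
    - apply Rmult_lt_reg_r with (INR c + 1); [lra|]. field_simplify; lra.
    - apply Rmult_le_reg_r with (INR c + 1); [lra|]. field_simplify; lra. }
  rewrite Rabs_minus_sym, Rabs_pos_eq; lra.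
Qed.

Definition lam (k : Kind) : nat -> Kt k :=
  match k return nat -> Kt k with
  | KR => lamR
  | KC => fun n => let (n1, n2) := Cantor.of_nat n in (lamR n1, lamR n2)
  end.

Lemma sqrt_sum_sq_le x y : sqrt (x * x + y * y) <= Rabs x + Rabs y.
Proof.
  pose proof (Rabs_pos x). pose proof (Rabs_pos y).
  rewrite <- (sqrt_Rsqr (Rabs x + Rabs y)) by lra.
  apply sqrt_le_1_alt. pose proof (Rsqr_abs x). pose proof (Rsqr_abs y).
  unfold Rsqr in *. nra.
Qed.

Lemma lam_dense k c eps : 0 < eps -> exists j, Kabs k (Ksub k c (lam k j)) < eps.
Proof.
  intro He. destruct k.
  - destruct (lamR_dense c eps He) as [n Hn]. exists n. simpl.
    replace (c + -1 * lamR n) with (c - lamR n) by ring. exact Hn.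
  - destruct c as [c1 c2].
    destruct (lamR_dense c1 (eps / 2)) as [n1 H1]; [lra|].
    destruct (lamR_dense c2 (eps / 2)) as [n2 H2]; [lra|].
    exists (Cantor.to_nat (n1, n2)). unfold lam. rewrite Cantor.cancel_of_to. simpl.
    replace (c1 + (-1 * lamR n1 - 0 * lamR n2)) with (c1 - lamR n1) by ring.
    replace (c2 + (-1 * lamR n2 + 0 * lamR n1)) with (c2 - lamR n2) by ring.
    pose proof (sqrt_sum_sq_le (c1 - lamR n1) (c2 - lamR n2)). lra.
Qed.

Section Generators.
Variable k : Kind.
Variable X : Frechet k.
Variables A B : X -> Prop.
Variables eA eB : nat -> X.
Hypothesis hA : forall x, A x <-> exists n, eA n = x.
Hypothesis hB : forall x, B x <-> exists n, eB n = x.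
Hypothesis dA : dense_in_X A.
Hypothesis dB : dense_in_X B.

Definition pick (P : X -> Prop) (dP : dense_in_X P) (y : X) (n m : nat) : X :=
  proj1_sig (constructive_indefinite_description _ (dP y n (/ (INR m + 1)) (inv_succ_pos m))).

Lemma pick_spec P dP y n m :
  P (pick P dP y n m) /\ sn n (vsub y (pick P dP y n m)) < / (INR m + 1).
Proof. unfold pick. destruct constructive_indefinite_description as [a Ha]. exact Ha. Qed.

Definition normalize (n : nat) (x : X) : X := vscal (KofR k (/ (1 + sn n x))) x.

Definition amplify (P : X -> Prop) (dP : dense_in_X P) (y : X) (n m : nat) : X :=
  vscal (KofR k (INR m + 1)) (vsub y (pick P dP y n m)).

Lemma normalize_bound n x : sn n (normalize n x) <= 1.
Proof.
  unfold normalize. rewrite sn_homog, Kabs_KofR. pose proof (sn_nonneg _ _ n x).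
  rewrite Rabs_pos_eq by (left; apply Rinv_0_lt_compat; lra).
  assert (E : / (1 + sn n x) * (1 + sn n x) = 1) by (field; lra).
  assert (0 < / (1 + sn n x)) by (apply Rinv_0_lt_compat; lra). nra.
Qed.

Lemma amplify_bound P dP y n m : sn n (amplify P dP y n m) <= 1.
Proof.
  unfold amplify. rewrite sn_homog, Kabs_KofR. pose proof (pos_INR m).
  rewrite Rabs_pos_eq by lra. destruct (pick_spec P dP y n m) as [_ Hlt].
  assert (E : (INR m + 1) * / (INR m + 1) = 1) by (field; lra).
  pose proof (sn_nonneg _ _ n (vsub y (pick P dP y n m))). nra.
Qed.

Definition target_of (u i i' : nat) : X :=
  match u with
  | 0%nat => eA i
  | 1%nat => eB i
  | 2%nat => vadd (eA i) (eA i')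
  | 3%nat => vadd (eB i) (eB i')
  | 4%nat => vscal (lam k i') (eA i)
  | _ => vscal (lam k i') (eB i)
  end.

Definition target (c : nat) : X :=
  let (u, r) := Cantor.of_nat c in let (i, i') := Cantor.of_nat r in target_of u i i'.

Lemma target_code u i i' : target (Cantor.to_nat (u, Cantor.to_nat (i, i'))) = target_of u i i'.
Proof. unfold target. rewrite !Cantor.cancel_of_to. reflexivity. Qed.

Definition gen_of (j t c m : nat) : X :=
  match t with
  | 0%nat => normalize j (target c)
  | 1%nat => amplify A dA (target c) j m
  | _ => amplify B dB (target c) j m
  end.

Definition gen (j : nat) : X :=
  let (t, r) := Cantor.of_nat j in let (c, m) := Cantor.of_nat r in gen_of j t c m.

Definition gen_code (t c m : nat) : nat := Cantor.to_nat (t, Cantor.to_nat (c, m)).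

Lemma gen_at_code t c m : gen (gen_code t c m) = gen_of (gen_code t c m) t c m.
Proof. unfold gen at 1, gen_code. rewrite !Cantor.cancel_of_to. reflexivity. Qed.

Lemma gen_diagonal j : sn j (gen j) <= 1.
Proof.
  unfold gen. destruct (Cantor.of_nat j) as [t r]. destruct (Cantor.of_nat r) as [c m].
  destruct t as [|[|t]]; [apply normalize_bound | apply amplify_bound | apply amplify_bound].
Qed.

Lemma gen_bounded n : exists M, 0 <= M /\ forall j, sn n (gen j) <= M.
Proof. exact (bounded_of_diagonal gen gen_diagonal n). Qed.

Lemma target_in_hull c : exists t, hull gen t (target c).
Proof.
  set (j := gen_code 0 c 0). set (x := target c).
  exists (Kabs k (KofR k (1 + sn j x))).
  assert (Ex : x = vscal (KofR k (1 + sn j x)) (gen j)).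
  { unfold j at 2. rewrite gen_at_code. simpl. fold j x. unfold normalize.
    pose proof (sn_nonneg _ _ j x).
    rewrite vscal_assoc, KofR_mul, Rinv_r, vscal_1 by lra. reflexivity. }
  rewrite Ex at 2. apply hull_gen.
Qed.

Lemma approx_of_amplified P dP y (f : nat -> nat) :
  (forall m, gen (f m) = amplify P dP y (f m) m) -> approx gen P y.
Proof.
  intros Hf eps He. destruct (small_inv eps He) as [m Hm].
  exists (pick P dP y (f m) m). split; [apply pick_spec|].
  assert (E : vsub y (pick P dP y (f m) m) = vscal (KofR k (/ (INR m + 1))) (gen (f m))).
  { rewrite Hf. unfold amplify. pose proof (pos_INR m).
    rewrite vscal_assoc, KofR_mul, Rinv_l, vscal_1 by lra. reflexivity. }
  rewrite E. eapply hull_mono; [apply hull_gen|].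
  rewrite Kabs_KofR, Rabs_pos_eq; [lra | left; apply inv_succ_pos].
Qed.

Lemma target_approx_A c : approx gen A (target c).
Proof. apply (approx_of_amplified A dA _ (gen_code 1 c)). intro m. apply gen_at_code. Qed.

Lemma target_approx_B c : approx gen B (target c).
Proof. apply (approx_of_amplified B dB _ (gen_code 2 c)). intro m. apply gen_at_code. Qed.

Lemma target_of_approx_A u i i' : approx gen A (target_of u i i').
Proof. rewrite <- target_code. apply target_approx_A. Qed.

Lemma target_of_approx_B u i i' : approx gen B (target_of u i i').
Proof. rewrite <- target_code. apply target_approx_B. Qed.

Lemma approx_sum_A a1 a2 : A a1 -> A a2 -> approx gen A (vadd a1 a2).
Proof.
  intros [i <-]%hA [i' <-]%hA. exact (target_of_approx_A 2 i i').
Qed.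

Lemma approx_sum_B b1 b2 : B b1 -> B b2 -> approx gen B (vadd b1 b2).
Proof.
  intros [i <-]%hB [i' <-]%hB. exact (target_of_approx_B 3 i i').
Qed.

Lemma approx_scal_A a j : A a -> approx gen A (vscal (lam k j) a).
Proof. intros [i <-]%hA. exact (target_of_approx_A 4 i j). Qed.

Lemma approx_scal_B b j : B b -> approx gen B (vscal (lam k j) b).
Proof. intros [i <-]%hB. exact (target_of_approx_B 5 i j). Qed.

Definition good (x : X) : Prop :=
  (exists t, hull gen t x) /\ approx gen A x /\ approx gen B x.

Lemma good_target c : good (target c).
Proof. split; [|split]; [apply target_in_hull | apply target_approx_A | apply target_approx_B]. Qed.

Lemma good_target_of u i i' : good (target_of u i i').
Proof. rewrite <- target_code. apply good_target. Qed.

Lemma good_A a : A a -> good a.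
Proof. intros [i <-]%hA. exact (good_target_of 0 i 0). Qed.

Lemma good_B b : B b -> good b.
Proof. intros [i <-]%hB. exact (good_target_of 1 i 0). Qed.

Lemma good_add x y : good x -> good y -> good (vadd x y).
Proof.
  intros [[t1 H1] [A1 B1]] [[t2 H2] [A2 B2]]. split; [|split].
  - exists (t1 + t2). apply (hull_add H1 H2). lra.
  - exact (approx_add approx_sum_A A1 A2).
  - exact (approx_add approx_sum_B B1 B2).
Qed.

Lemma good_scal c x : good x -> good (vscal c x).
Proof.
  intros [[t Ht] [Ax Bx]]. split; [|split].
  - eexists. apply (hull_scal c Ht).
  - exact (approx_scal approx_scal_A (lam_dense k) c Ax Ht).
  - exact (approx_scal approx_scal_B (lam_dense k) c Bx Ht).
Qed.

Lemma good_amplify P dP y n m : (forall a, P a -> good a) -> good y -> good (amplify P dP y n m).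
Proof.
  intros HP Hy. unfold amplify, vsub. apply good_scal, good_add; [exact Hy|].
  rewrite <- vscal_m1. apply good_scal, HP, pick_spec.
Qed.

Lemma good_gen j : good (gen j).
Proof.
  unfold gen. destruct (Cantor.of_nat j) as [t r]. destruct (Cantor.of_nat r) as [c m].
  destruct t as [|[|t]]; simpl.
  - apply good_scal, good_target.
  - apply good_amplify; [exact good_A | apply good_target].
  - apply good_amplify; [exact good_B | apply good_target].
Qed.

Lemma banach_disk_from_enumerations : exists D : X -> Prop,
    banach_disk D /\
    (forall a, A a -> span D a) /\ (forall b, B b -> span D b) /\
    dense_in_XD D A /\ dense_in_XD D B.
Proof.
  exists (unit_hull gen). split; [|split; [|split; [|split]]].
  - exact (unit_hull_banach gen_bounded).
  - intros a Ha. destruct (good_A a Ha) as [[t Ht] _]. exact (hull_span Ht).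
  - intros b Hb. destruct (good_B b Hb) as [[t Ht] _]. exact (hull_span Ht).
  - exact (approx_dense approx_sum_A approx_scal_A (lam_dense k) (fun j => proj1 (proj2 (good_gen j)))).
  - exact (approx_dense approx_sum_B approx_scal_B (lam_dense k) (fun j => proj2 (proj2 (good_gen j)))).
Qed.

End Generators.

Theorem lemma4p2 (k : Kind) (X : Frechet k) (A B : X -> Prop) :
  countable_inf A -> countable_inf B -> dense_in_X A -> dense_in_X B ->
  exists D : X -> Prop,
    banach_disk D /\
    (forall a, A a -> span D a) /\ (forall b, B b -> span D b) /\
    dense_in_XD D A /\ dense_in_XD D B.
Proof.
  intros [eA [_ hA]] [eB [_ hB]] dA dB.
  exact (banach_disk_from_enumerations k X A B eA eB hA hB dA dB).
Qed.
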